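(* Let $\Sigma$ be a finite alphabet with $|\Sigma|\ge 2$, let $m,n$ be positive integers with $m\ge 2$, and let $\rho,\rho_1,\rho_2,\rho_3$ be real numbers with $0<\rho<1$, $\rho_1>0$, $\rho_2>0$, $\rho_3>0$ and $\rho_1+\rho_2+\rho_3\le 1$. Then the Markov chains with transition matrices $S^{\mathfrak{N}(n)}_{\rho_1,\rho_2,\rho_3}$, $S^{\mathfrak{N}_m(n)}_{\rho_1,\rho_2,\rho_3}$ and $S^{\mathfrak{N}'_m(n)}_{\rho_1,\rho_2,\rho_3}$ are irreducible, and so are the Markov chains with transition matrices $S^{\mathfrak{N}(n)^\bullet}_{\rho}$, $S^{\mathfrak{N}_m(n)^\bullet}_{\rho}$ and $S^{\mathfrak{N}'_m(n)^\bullet}_{\rho}$.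
   Context: A non-deterministic automaton (NFA) over $\Sigma$ is a tuple $(Q,\Sigma,\Delta,I,F)$ with $Q$ a finite set of states, $\Delta\subseteq Q\times\Sigma\times Q$ the transitions, $I\subseteq Q$ the initial states and $F\subseteq Q$ the final states. A path is a sequence of transitions $(p_0,a_0,q_0)\cdots(p_k,a_k,q_k)$ with $q_i=p_{i+1}$. The NFA is accessible if every state is reachable by a path from an initial state, co-accessible if from every state a final state is reachable by a path, and trim if both. $\mathfrak{N}(n)$ is the set of trim NFAs over $\Sigma$ with state set $Q=\{1,\dots,n\}$. $\mathfrak{N}_m(n)$ is the set of automata in $\mathfrak{N}(n)$ such that for each state $p$ there are at most $m$ pairs $(a,q)$ with $(p,a,q)\in\Delta$. $\mathfrak{N}'_m(n)$ is the set of automata in $\mathfrak{N}(n)$ such that for each state $p$ and each letter $a$ there are at most $m$ states $q$ with $(p,a,q)\in\Delta$. For a class $\mathfrak{X}$, $\mathfrak{X}^\bullet$ is the subclass of automata whose set of initial states is exactly $\{1\}$. For an automaton $\mathcal{A}=(Q,\Sigma,\Delta,I,F)$: $\mathsf{Ch_{init}}(\mathcal{A},q)$ is $\mathcal{A}$ with $q$ removed from $I$ if $q\in I$ and added to $I$ otherwise; $\mathsf{Ch_{final}}(\mathcal{A},q)$ is defined similarly with $F$; $\mathsf{Ch_{trans}}(\mathcal{A},(p,a,q))$ is $\mathcal{A}$ with $(p,a,q)$ removed from $\Delta$ if present and added otherwise. For a class $\mathfrak{X}$ of automata with state set $Q=\{1,\dots,n\}$ and reals $\rho_i\in[0,1]$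 with $\rho_1+\rho_2+\rho_3\le1$, the matrix $S^{\mathfrak{X}}_{\rho_1,\rho_2,\rho_3}$ on $\mathfrak{X}\times\mathfrak{X}$ is: for $x\ne y$, $S(x,y)=\rho_1/n$ if $y=\mathsf{Ch_{init}}(x,q)$ for some $q$; $S(x,y)=\rho_2/n$ if $y=\mathsf{Ch_{final}}(x,q)$ for some $q$; $S(x,y)=\rho_3/(|\Sigma|n^2)$ if $y=\mathsf{Ch_{trans}}(x,(p,a,q))$ for some $(p,a,q)\in Q\times\Sigma\times Q$; $S(x,y)=0$ otherwise; and $S(x,x)=1-\sum_{y\ne x}S(x,y)$. For $\mathfrak{X}\in\{\mathfrak{N}(n),\mathfrak{N}_m(n),\mathfrak{N}'_m(n)\}$ and $0<\rho<1$, $S^{\mathfrak{X}^\bullet}_\rho$ is the matrix $S^{\mathfrak{X}^\bullet}_{0,\rho,1-\rho}$ defined by the same rules on the class $\mathfrak{X}^\bullet$. A Markov chain is irreducible if the directed graph on its state space with an edge $x\to y$ whenever the transition probability from $x$ to $y$ is nonzero is strongly connected. *)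

From mathcomp Require Import all_boot all_order all_algebra.
Set Implicit Arguments. Unset Strict Implicit. Unset Printing Implicit Defensive.
Import Order.TTheory GRing.Theory Num.Theory.
Local Open Scope ring_scope.

(* An NFA over alphabet A with state set 'I_n (state k+1 of the paper is the
   ordinal k) is a triple (I, F, Delta). *)
Definition nfa (n : nat) (A : finType) : finType :=
  ({set 'I_n} * {set 'I_n} * {set ('I_n * A * 'I_n)})%type.

Section NFA.
Variables (n : nat) (A : finType).
Implicit Types (x y : nfa n A).

Definition init x : {set 'I_n} := x.1.1.
Definition final x : {set 'I_n} := x.1.2.
Definition trans x : {set ('I_n * A * 'I_n)} := x.2.

Definition step x : rel 'I_n := fun p q => [exists a : A, (p, a, q) \in trans x].

Definition accessible x : bool :=
  [forall q : 'I_n, [exists i in init x, connect (step x) i q]].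
Definition coaccessible x : bool :=
  [forall q : 'I_n, [exists f in final x, connect (step x) q f]].
Definition trim x : bool := accessible x && coaccessible x.

Definition classN : pred (nfa n A) := fun x => trim x.
Definition classNm (m : nat) : pred (nfa n A) := fun x =>
  trim x && [forall p : 'I_n,
     #|[set aq : A * 'I_n | (p, aq.1, aq.2) \in trans x]| <= m]%N.
Definition classN'm (m : nat) : pred (nfa n A) := fun x =>
  trim x && [forall p : 'I_n, forall a : A,
     #|[set q : 'I_n | (p, a, q) \in trans x]| <= m]%N.

Definition bullet (X : pred (nfa n A)) : pred (nfa n A) := fun x =>
  X x && (init x == [set i : 'I_n | val i == 0%N]).

Definition toggle {T : finType} (S : {set T}) (t : T) : {set T} :=
  if t \in S then S :\ t else t |: S.

Definition Ch_init x (q : 'I_n) : nfa n A := (toggle (init x) q, final x, trans x).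
Definition Ch_final x (q : 'I_n) : nfa n A := (init x, toggle (final x) q, trans x).
Definition Ch_trans x (t : 'I_n * A * 'I_n) : nfa n A :=
  (init x, final x, toggle (trans x) t).

Variable R : realFieldType.

Definition S_off (r1 r2 r3 : R) x y : R :=
  if [exists q, y == Ch_init x q] then r1 / n%:R
  else if [exists q, y == Ch_final x q] then r2 / n%:R
  else if [exists t, y == Ch_trans x t] then r3 / (#|A|%:R * (n ^ 2)%:R)
  else 0.

(* the matrix S^X_{rho1,rho2,rho3}, meaningful on X x X *)
Definition Smat (X : pred (nfa n A)) (r1 r2 r3 : R) x y : R :=
  if x == y then 1 - \sum_(z : nfa n A | X z && (z != x)) S_off r1 r2 r3 x z
  else S_off r1 r2 r3 x y.

Definition Smat_bullet (X : pred (nfa n A)) (r : R) x y : R :=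
  Smat (bullet X) 0 r (1 - r) x y.

Definition irreducible (X : pred (nfa n A)) (M : nfa n A -> nfa n A -> R) : Prop :=
  forall x y, X x -> X y ->
    exists s : seq (nfa n A),
      [/\ all X s, path (fun u v => M u v != 0) x s & last x s = y].

End NFA.

Arguments classN n A : clear implicits.
Arguments classNm n A m : clear implicits.
Arguments classN'm n A m : clear implicits.

(* Only the support of the matrices matters: toggling an initial state, a final
   state or a transition is a move of positive probability in both directions as
   soon as both automata lie in the class.  Without the constraint on initial
   states, every trim automaton (I, F, D) is joined to (Q, Q, empty): make every
   state final, then every state initial (reachability only improves), then drop
   the transitions one by one, an automaton with I = F = Q being always trim.
   With the initial states frozen to {1}, first make every state final; then
   accessibility from 1 is the only constraint, and one walks to the chain
   1 -a-> 2 -a-> ... -a-> n by extending the prefix of the chain already present.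
   If its next edge, leaving state k, is missing: either some non-chain transition
   is inessential and is dropped, or k has out-degree at most 1 and the edge is
   added, or every non-chain transition is essential.  In the last case the
   targets of essential transitions are pairwise distinct, so a counting argument
   yields a state l of out-degree at most 1 that stays reachable once an outgoing
   non-chain transition e of k is removed; adding l -a-> target(e) makes e
   inessential, and dropping e lowers the out-degree of k.  Adding a transition at
   a state of out-degree at most 1 respects the bounds of N_m and N'_m as m >= 2. *)

From mathcomp Require Import all_boot all_order all_algebra.
Set Implicit Arguments. Unset Strict Implicit. Unset Printing Implicit Defensive.
Import Order.TTheory GRing.Theory Num.Theory.

Section Connect.
Variables (T U : finType) (e : rel T).

Lemma connect_forward_closed (P : pred T) x y :
  P x -> (forall u v, P u -> e u v -> P v) -> connect e x y -> P y.
Proof.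
move=> + closedP /connectP [p + ->]; elim: p x => //= z p IHp x Px /andP [exz pz].
exact: IHp (closedP _ _ Px exz) pz.
Qed.

Lemma connect_homo (e' : rel U) (f : T -> U) x y :
  (forall u v, e u v -> e' (f u) (f v)) -> connect e x y -> connect e' (f x) (f y).
Proof.
move=> homo_f; apply: (connect_forward_closed (P := fun z => connect e' (f x) (f z))).
  exact: connect0.
by move=> u v xu /homo_f /connect1; apply: connect_trans.
Qed.
End Connect.

Section Toggle.
Variable K : finType.
Implicit Types (S : {set K}) (t : K).

Lemma toggle_in S t : t \in S -> toggle S t = S :\ t.
Proof. by rewrite /toggle => ->. Qed.

Lemma toggle_notin S t : t \notin S -> toggle S t = t |: S.
Proof. by rewrite /toggle => /negbTE ->. Qed.

Lemma toggle_neq S t : toggle S t != S.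
Proof.
rewrite /toggle; case: ifP => tS; apply/eqP => eqS; move: tS.
  by rewrite -eqS setD11.
by rewrite -eqS setU11.
Qed.

Lemma toggleK t : involutive (toggle^~ t).
Proof.
move=> S; case tS: (t \in S).
  by rewrite (toggle_in tS) toggle_notin ?setD11 // setD1K.
by rewrite (toggle_notin (negbT tS)) toggle_in ?setU11 // setU1K ?tS.
Qed.

Variable Q : pred {set K}.

Definition toggle_rel : rel {set K} :=
  fun S S' => [&& Q S, Q S' & [exists t, S' == toggle S t]].

Lemma connect_toggle_rel_subset S0 S : S0 \subset S ->
  (forall S', S0 \subset S' -> S' \subset S -> Q S') -> connect toggle_rel S S0.
Proof.
move Hk: #|S :\: S0| => k; elim: k S Hk => [|k IHk] S Hk sub0 QS.
  suff -> : S = S0 by apply: connect0.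
  by apply/eqP; rewrite eqEsubset sub0 andbT -setD_eq0 -cards_eq0 Hk.
have [q] : exists q, q \in S :\: S0 by apply/card_gt0P; rewrite Hk.
rewrite inE => /andP [qS0 qS].
have sub0q : S0 \subset S :\ q by rewrite subsetD1 sub0.
apply: connect_trans (connect1 _) (IHk _ _ sub0q _).
- by rewrite /toggle_rel !QS ?subxx ?subD1set //=; apply/existsP; exists q; rewrite toggle_in.
- have -> : (S :\ q) :\: S0 = (S :\: S0) :\ q by apply/setP => z; rewrite !inE andbCA.
  by move: Hk; rewrite (cardsD1 q) inE qS qS0 => -[].
- by move=> S' ? sub'; apply: QS => //; apply: subset_trans sub' (subD1set _ _).
Qed.
End Toggle.

Section LabeledGraph.
Variables (V A : finType) (r : V).
Local Notation edge := (V * A * V)%type.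
Implicit Types (D P : {set edge}) (e : edge).

Definition dstep D : rel V := fun p q => [exists a, (p, a, q) \in D].
Definition out D p : {set A * V} := [set aq | (p, aq.1, aq.2) \in D].
Definition reaches_all D := [forall q, connect (dstep D) r q].
Definition essential D e := ~~ connect (dstep (D :\ e)) r e.2.

Lemma out_setU1_src D e : out (e |: D) e.1.1 = (e.1.2, e.2) |: out D e.1.1.
Proof.
by case: e => [[p a] q]; apply/setP => -[b z]; rewrite !inE /= !xpair_eqE eqxx.
Qed.

Lemma out_setD1_src D e : out (D :\ e) e.1.1 = out D e.1.1 :\ (e.1.2, e.2).
Proof.
by case: e => [[p a] q]; apply/setP => -[b z]; rewrite !inE /= !xpair_eqE eqxx.
Qed.

Lemma out_setU1_other D e p : p != e.1.1 -> out (e |: D) p = out D p.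
Proof.
by move=> ne; apply/setP => aq; rewrite !inE; case: eqP => // pe; rewrite -pe /= eqxx in ne.
Qed.

Lemma connect_dstep_sub D D' p q :
  D \subset D' -> connect (dstep D) p q -> connect (dstep D') p q.
Proof.
move=> sDD'; apply: connect_sub => u v /existsP [a uv]; apply: connect1.
by apply/existsP; exists a; apply: (subsetP sDD').
Qed.

Lemma reaches_all_sub D D' : D \subset D' -> reaches_all D -> reaches_all D'.
Proof. by move=> sDD' /forallP rD; apply/forallP => q; apply: connect_dstep_sub (rD q). Qed.

Lemma dstep_edge D e : e \in D -> dstep D e.1.1 e.2.
Proof. by case: e => [[p a] q] eD; apply/existsP; exists a. Qed.

Lemma reaches_allD1 D e : reaches_all D -> reaches_all (D :\ e) = ~~ essential D e.
Proof.
move=> /forallP rD; apply/idP/idP => [/forallP /(_ e.2)|]; first by rewrite negbK.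
rewrite negbK => re; apply/forallP => z.
apply: (connect_forward_closed (P := connect (dstep (D :\ e)) r) (connect0 _ r)) (rD z).
move=> u v ru /existsP [a uv].
have [uve|neq] := eqVneq (u, a, v) e; first by move: re; rewrite -uve.
by apply: connect_trans ru (connect1 _); apply/existsP; exists a; rewrite !inE neq.
Qed.

Lemma essential_target_inj D : reaches_all D ->
  {in D &, forall e e', essential D e -> essential D e' -> e.2 = e'.2 -> e = e'}.
Proof.
move=> /forallP rD e e' eD e'D ess ess' same; apply: contraTeq ess => neq.
pose Z := connect (dstep ((D :\ e) :\ e')) r.
have subZe : (D :\ e) :\ e' \subset D :\ e by apply: subD1set.
have subZe' : (D :\ e) :\ e' \subset D :\ e'.
  by apply/subsetP => z; rewrite !inE => /and3P [-> _ ->].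
rewrite negbK; case Zs: (Z e.1.1).
  move: ess'; rewrite /essential -same; apply: contraR => _.
  apply: connect_trans (connect_dstep_sub subZe' Zs) (connect1 (dstep_edge _)).
  by rewrite !inE neq.
case Zs': (Z e'.1.1).
  apply: connect_trans (connect_dstep_sub subZe Zs') _; rewrite same.
  by apply/connect1/dstep_edge; rewrite !inE eq_sym neq.
apply: connect_dstep_sub subZe _.
apply: (connect_forward_closed (P := Z) (connect0 _ r)) (rD e.2) => u v Zu /existsP [a uv].
have nue : (u, a, v) != e by apply: contraTneq Zu => uve; move: Zs; rewrite -uve /= => ->.
have nue' : (u, a, v) != e' by apply: contraTneq Zu => uve; move: Zs'; rewrite -uve /= => ->.
by apply: connect_trans Zu (connect1 _); apply/existsP; exists a; rewrite !inE nue nue'.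
Qed.

Lemma exists_reachable_low_outdeg D P e :
  reaches_all D -> e \in P -> (forall z, #|out P z| <= 1) ->
  {in D :\: P, forall e', essential D e'} ->
  exists2 l, connect (dstep (D :\ e)) r l & #|out D l| <= 1.
Proof.
move=> rD eP outP1 essDP.
(* Otherwise each reachable state has a transition outside P; these are essential,
   hence have distinct targets, all reachable and different from r: too many. *)
pose Rch := [set z | connect (dstep (D :\ e)) r z].
have [/exists_inP [l]|/exists_inPn high] := boolP [exists l in Rch, #|out D l| <= 1].
  by rewrite inE; exists l.
pose E := [set e' in D :\: P | e'.1.1 \in Rch].
have Rch_src : Rch \subset [set e'.1.1 | e' in E].
  apply/subsetP => z zR; have := high z zR; rewrite -ltnNge => outD2.
  have [[a q]] : exists aq, aq \in out D z :\: out P z.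
    apply/card_gt0P; rewrite cardsD subn_gt0; apply: leq_ltn_trans outD2.
    exact: leq_trans (subset_leq_card (subsetIr _ _)) (outP1 z).
  rewrite !inE /= => /andP [nP inD]; apply/imsetP; exists (z, a, q) => //.
  by rewrite inE /= zR andbT !inE nP inD.
have E_tgt : [set e'.2 | e' in E] \subset Rch :\ r.
  apply/subsetP => _ /imsetP [e' + ->]; rewrite !inE => /andP [/andP [nP e'D] zR].
  rewrite (contraNneq _ (essDP e' _)) ?inE ?nP //=; last by move=> ->; apply: connect0.
  apply: connect_trans zR (connect1 (dstep_edge _)).
  by rewrite !inE e'D andbT; apply: contraNneq nP => ->.
have inj_tgt : {in E &, injective (fun e' : edge => e'.2)}.
  move=> e1 e2; rewrite !inE => /andP [/andP [n1 D1] _] /andP [/andP [n2 D2] _].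
  by apply: (@essential_target_inj D) => //; apply: essDP; rewrite !inE ?n1 ?D1 ?n2 ?D2.
have := leq_trans (subset_leq_card Rch_src) (leq_imset_card _ _).
rewrite -(card_in_imset inj_tgt) => /(leq_trans)/(_ (subset_leq_card E_tgt)).
by rewrite (cardsD1 r) inE connect0 add1n ltnn.
Qed.
End LabeledGraph.

Section Chain.
Variables (n' : nat) (A : finType) (a0 : A).
Local Notation V := 'I_n'.+1.
Local Notation edge := (V * A * V)%type.
Implicit Types (D : {set edge}) (e : edge).

Definition chain k : {set edge} :=
  [set e | [&& e.1.2 == a0, val e.2 == (val e.1.1).+1 & val e.1.1 < k]].
Definition link k : edge := (inord k, a0, inord k.+1).

Lemma chain0 : chain 0 = set0.
Proof. by apply/setP => e; rewrite !inE ltn0 !andbF. Qed.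

Lemma chainS k : k < n' -> chain k.+1 = link k |: chain k.
Proof.
move=> ltk; have ltk1 : k < n'.+1 := ltnW ltk.
apply/setP => -[[p a] q]; rewrite !inE /= ltnS leq_eqVlt.
rewrite /link !xpair_eqE -!val_eqE /= !inordK //.
by case: ltngtP => //= ->; rewrite andbT !andbF orbF.
Qed.

Lemma reaches_all_chain D : chain n' \subset D -> reaches_all ord0 D.
Proof.
move=> sub; apply/forallP => q; have [j ltj ->] : exists2 j, j < n'.+1 & q = inord j.
  by exists q; rewrite ?inord_val.
elim: j ltj => [|j IHj] ltj.
  by rewrite (_ : inord 0 = ord0) ?connect0 //; apply/val_inj/inordK.
apply: connect_trans (IHj (ltnW ltj)) (connect1 _).
apply: (@dstep_edge _ _ _ (link j)); apply: (subsetP sub).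
by rewrite inE /= !inordK ?eqxx // ltnW.
Qed.

Lemma out_chain_le1 k p : #|out (chain k) p| <= 1.
Proof.
apply/card_le1_eqP => -[a q] [b q']; rewrite !inE /=.
move=> /and3P [/eqP-> /eqP qp _] /and3P [/eqP-> /eqP q'p _].
by congr pair; apply/val_inj; rewrite /= qp q'p.
Qed.

Lemma out_chain_eq0 k (p : V) : k <= p -> out (chain k) p = set0.
Proof. by move=> le_kp; apply/setP => aq; rewrite !inE ltnNge le_kp !andbF. Qed.

Lemma out_chainU1_le1 k e : val e.1.1 = k -> forall p, #|out (e |: chain k) p| <= 1.
Proof.
move=> ek p; have [-> | ne] := eqVneq p e.1.1.
  by rewrite out_setU1_src out_chain_eq0 ?ek // setU0 cards1.
by rewrite out_setU1_other ?out_chain_le1.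
Qed.
End Chain.

Section ChainWalk.
Variables (n' : nat) (A : finType) (a0 : A) (ok : pred {set 'I_n'.+1 * A * 'I_n'.+1}).
Local Notation V := 'I_n'.+1.
Local Notation edge := (V * A * V)%type.
Local Notation chain := (chain n' a0).
Local Notation link := (link n' a0).
Hypothesis ok_sub : forall D D' : {set edge}, D' \subset D -> ok D -> ok D'.
Hypothesis ok_add : forall (D : {set edge}) e, ok D -> #|out D e.1.1| <= 1 -> ok (e |: D).
Implicit Types (D : {set edge}) (e : edge).

Definition admissible D := reaches_all ord0 D && ok D.
Local Notation T := (toggle_rel admissible).

Lemma toggle_rel_drop D e :
  admissible D -> e \in D -> ~~ essential ord0 D e -> T D (D :\ e).
Proof.
move=> /andP [rD okD] eD ness; rewrite /toggle_rel /admissible rD okD reaches_allD1 //= ness.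
rewrite (ok_sub (subD1set D e) okD); apply/existsP; exists e; by rewrite toggle_in.
Qed.

Lemma toggle_rel_add D e :
  admissible D -> e \notin D -> #|out D e.1.1| <= 1 -> T D (e |: D).
Proof.
move=> /andP [rD okD] eD low; rewrite /toggle_rel /admissible rD okD ok_add //=.
rewrite (reaches_all_sub (subsetU1 e D) rD); apply/existsP; exists e; by rewrite toggle_notin.
Qed.

Lemma reroute_step k D e :
  chain k \subset D -> admissible D -> e \in D -> val e.1.1 = k -> 1 < #|out D e.1.1| ->
  {in D :\: chain k, forall e', essential ord0 D e'} ->
  exists2 D', connect T D D' &
    [/\ admissible D', chain k \subset D', #|D'| = #|D| & #|out D' e.1.1| < #|out D e.1.1|].
Proof.
move=> sub gD eD ek high ess; have [rD _] := andP gD.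
have e_chain : e \notin chain k by rewrite inE ek ltnn !andbF.
have ess' : {in D :\: (e |: chain k), forall e', essential ord0 D e'}.
  by move=> e'; rewrite !inE negb_or => /andP [/andP [_ nc] e'D]; apply: ess; rewrite !inE nc.
have [l reach_l low_l] :=
  exists_reachable_low_outdeg rD (setU11 e _) (out_chainU1_le1 a0 ek) ess'.
have ne_l : l != e.1.1 by apply: contraTneq low_l => ->; rewrite -ltnNge.
pose e' : edge := (l, a0, e.2).
have ne_e' : e' != e by apply: contraNneq ne_l => <-.
have reroute : connect (dstep ((e' |: D) :\ e)) ord0 e.2.
  apply: connect_trans (connect_dstep_sub _ reach_l) (connect1 (@dstep_edge _ _ _ e' _)).
    by apply: setSD; apply: subsetU1.
  by rewrite !inE eqxx ne_e'.
have e'D : e' \notin D.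
  apply: contraTN (ess e _) => [e'D|]; last by rewrite in_setD e_chain eD.
  by rewrite negbK -[D in D :\ e](setUidPr (_ : [set e'] \subset D)) ?sub1set.
have T1 := toggle_rel_add gD e'D low_l; have [_ gD1 _] := and3P T1.
have T2 : T (e' |: D) ((e' |: D) :\ e).
  by apply: toggle_rel_drop; rewrite ?negbK // !inE eD orbT.
exists ((e' |: D) :\ e); first exact: connect_trans (connect1 T1) (connect1 T2).
have [_ gD2 _] := and3P T2; split=> //.
- by rewrite subsetD1 e_chain (subset_trans sub (subsetU1 _ _)).
- by have := cardsD1 e (e' |: D); rewrite cardsU1 e'D in_setU1 eD orbT /= => -[].
- rewrite out_setD1_src out_setU1_other 1?eq_sym //; apply: proper_card; apply: properD1.
  by rewrite inE /= -!surjective_pairing.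
Qed.

Lemma chain_step k D : k < n' -> chain k \subset D -> admissible D ->
  exists2 D', connect T D D' & admissible D' && (chain k.+1 \subset D').
Proof.
move=> ltk; have [mu] := ubnP (#|D| + #|out D (inord k)|).
(* Dropping an inessential edge or rerouting through [reroute_step] decreases mu. *)
elim: mu D => // mu IHmu D lt_mu sub gD.
have IH D' : connect T D D' -> #|D'| + #|out D' (inord k)| < #|D| + #|out D (inord k)| ->
    chain k \subset D' -> admissible D' ->
  exists2 D'', connect T D D'' & admissible D'' && (chain k.+1 \subset D'').
  move=> DD' lt_D' sub' gD'; have [|D'' D'D'' adm''] := IHmu D' _ sub' gD'.
    exact: leq_trans lt_D' _.
  by exists D''; first exact: connect_trans DD' D'D''.
have [linkD | linkND] := boolP (link k \in D).
  by exists D; rewrite ?connect0 // gD (chainS a0 ltk) subUset sub1set linkD.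
have [/exists_inP [e] | /exists_inPn ess] :=
  boolP [exists e in D :\: chain k, ~~ essential ord0 D e].
  rewrite inE => /andP [ec eD] ness; have Tdrop := toggle_rel_drop gD eD ness.
  apply: IH (connect1 Tdrop) _ _ _; last by case/and3P: Tdrop.
    rewrite (cardsD1 e D) eD add1n addSn ltnS leq_add2l subset_leq_card //.
    by apply/subsetP => aq; rewrite !inE => /andP [].
  by rewrite subsetD1 sub.
case: (leqP #|out D (inord k)| 1) => [low | high].
  have Tadd := toggle_rel_add gD linkND low; have [_ gD1 _] := and3P Tadd.
  by exists (link k |: D); rewrite ?connect1 // gD1 (chainS a0 ltk) setUS.
have [[a q] aqD] : exists aq, aq \in out D (inord k) by apply/card_gt0P; apply: ltnW.
have eD : (inord k, a, q) \in D by rewrite inE in aqD.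
have [|D' DD' [gD' subD' cardD' ltout]] := reroute_step sub gD eD (inordK (ltnW ltk)) high.
  by move=> e /ess; rewrite negbK.
by apply: IH DD' _ subD' gD'; rewrite cardD' ltn_add2l.
Qed.

Lemma connect_chain D : admissible D -> connect T D (chain n').
Proof.
move=> gD; have chain_prefix k : k <= n' ->
    exists2 D', connect T D D' & admissible D' && (chain k \subset D').
  elim: k => [|k IHk] ltk; first by exists D; rewrite ?connect0 // chain0 sub0set gD.
  have [D1 DD1 /andP [gD1 sub1]] := IHk (ltnW ltk).
  have [D2 D1D2 adm2] := chain_step ltk sub1 gD1.
  by exists D2; first exact: connect_trans DD1 D1D2.
have [D' DD' /andP [gD' subD']] := chain_prefix n' (leqnn n').
apply: connect_trans DD' (connect_toggle_rel_subset subD' _) => D1 subD1 subD1D'.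
by rewrite /admissible (reaches_all_chain subD1) (ok_sub subD1D') //; case/andP: gD'.
Qed.
End ChainWalk.

Section Moves.
Variables (n : nat) (A : finType).
Implicit Types (x : nfa n A).

Lemma Ch_init_neq x q : Ch_init x q != x.
Proof. by case: x => [[I F] D]; apply/eqP => -[] /eqP; apply/negP/toggle_neq. Qed.

Lemma Ch_final_neq x q : Ch_final x q != x.
Proof. by case: x => [[I F] D]; apply/eqP => -[] /eqP; apply/negP/toggle_neq. Qed.

Lemma Ch_trans_neq x t : Ch_trans x t != x.
Proof. by case: x => [[I F] D]; apply/eqP => -[] /eqP; apply/negP/toggle_neq. Qed.
End Moves.

Section Entries.
Variables (n : nat) (A : finType) (R : realFieldType) (X : pred (nfa n A)).
Variables (s1 s2 s3 : R).
Hypotheses (n_gt0 : (0 < n)%N) (A_gt0 : (0 < #|A|)%N).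
Implicit Types (x : nfa n A).
Local Open Scope ring_scope.

Lemma Smat_offdiag x y : x != y -> Smat X s1 s2 s3 x y = S_off s1 s2 s3 x y.
Proof. by rewrite /Smat => /negbTE ->. Qed.

Lemma divr_nat_neq0 (s : R) k : s != 0 -> (0 < k)%N -> s / k%:R != 0.
Proof. by move=> s0 k0; rewrite mulf_neq0 // invr_eq0 pnatr_eq0 -lt0n. Qed.

Lemma Smat_Ch_init x q : s1 != 0 -> Smat X s1 s2 s3 x (Ch_init x q) != 0.
Proof.
move=> s10; rewrite Smat_offdiag; last by rewrite eq_sym Ch_init_neq.
by rewrite /S_off ifT ?divr_nat_neq0 //; apply/existsP; exists q.
Qed.

Lemma Smat_Ch_final x q : s2 != 0 -> Smat X s1 s2 s3 x (Ch_final x q) != 0.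
Proof.
move=> s20; rewrite Smat_offdiag; last by rewrite eq_sym Ch_final_neq.
rewrite /S_off; case: ifP => [/existsP [q' /eqP /(congr1 (@final _ _))]|_].
  by move/eqP; rewrite (negbTE (toggle_neq _ _)).
by rewrite ifT ?divr_nat_neq0 //; apply/existsP; exists q.
Qed.

Lemma Smat_Ch_trans x t : s3 != 0 -> Smat X s1 s2 s3 x (Ch_trans x t) != 0.
Proof.
move=> s30; rewrite Smat_offdiag; last by rewrite eq_sym Ch_trans_neq.
rewrite /S_off; case: ifP => [/existsP [q /eqP /(congr1 (@trans _ _))]|_].
  by move/eqP; rewrite (negbTE (toggle_neq _ _)).
case: ifP => [/existsP [q /eqP /(congr1 (@trans _ _))]|_].
  by move/eqP; rewrite (negbTE (toggle_neq _ _)).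
rewrite ifT -?natrM ?divr_nat_neq0 ?muln_gt0 ?expn_gt0 ?A_gt0 ?n_gt0 //.
by apply/existsP; exists t.
Qed.
End Entries.

Section Trim.
Variables (n : nat) (A : finType).
Implicit Types (I F : {set 'I_n}) (D : {set 'I_n * A * 'I_n}).

Lemma accessible_sub I I' F F' D D' :
  I \subset I' -> D \subset D' -> accessible (n:=n) (A:=A) (I, F, D) -> accessible (I', F', D').
Proof.
move=> sI sD /forallP acc; apply/forallP => q; have /exists_inP [i iI ci] := acc q.
by apply/exists_inP; exists i; [apply: (subsetP sI) | apply: connect_dstep_sub ci].
Qed.

Lemma coaccessible_sub I I' F F' D D' :
  F \subset F' -> D \subset D' -> coaccessible (n:=n) (A:=A) (I, F, D) -> coaccessible (I', F', D').
Proof.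
move=> sF sD /forallP coacc; apply/forallP => q; have /exists_inP [f fF cf] := coacc q.
by apply/exists_inP; exists f; [apply: (subsetP sF) | apply: connect_dstep_sub cf].
Qed.

Lemma coaccessible_setT I D : coaccessible (I, setT, D).
Proof. by apply/forallP => q; apply/exists_inP; exists q; rewrite ?inE ?connect0. Qed.

Lemma trim_setT D : trim (setT, setT, D).
Proof.
rewrite /trim coaccessible_setT andbT.
by apply/forallP => q; apply/exists_inP; exists q; rewrite ?inE ?connect0.
Qed.
End Trim.

Section Biedges.
Local Open Scope ring_scope.
Variables (n : nat) (A : finType) (R : realFieldType).
Implicit Types (X : pred (nfa n A)) (M : nfa n A -> nfa n A -> R).
Implicit Types (I F : {set 'I_n}) (D : {set 'I_n * A * 'I_n}).

Definition biedge X M : rel (nfa n A) :=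
  fun x y => [&& X x, X y, M x y != 0 & M y x != 0].

Lemma biedge_sym X M : symmetric (biedge X M).
Proof. by move=> x y; rewrite /biedge andbCA [(_ != 0) && _]andbC. Qed.

Lemma connect_biedgeC X M x y : connect (biedge X M) x y = connect (biedge X M) y x.
Proof. exact/sym_connect_sym/biedge_sym. Qed.

Lemma irreducible_of_hub X M c :
  (forall x, X x -> connect (biedge X M) x c) -> irreducible X M.
Proof.
move=> hub x y Xx Xy.
have /connectP [s xs ->] : connect (biedge X M) x y.
  by apply: connect_trans (hub x Xx) _; rewrite connect_biedgeC hub.
exists s; split=> //; last by apply: sub_path xs => u v /and4P [].
by elim: s x {Xx} xs => //= z s IHs x /andP [/and4P [_ -> _ _] /IHs].
Qed.

Lemma connect_biedge_toggle (K : finType) (Q : pred {set K}) (g : {set K} -> nfa n A) X M :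
  (forall S, Q S = X (g S)) -> (forall S t, M (g S) (g (toggle S t)) != 0) ->
  forall S S', connect (toggle_rel Q) S S' -> connect (biedge X M) (g S) (g S').
Proof.
move=> QE M_neq0 S S'; apply: connect_homo => U U' /and3P [QU QU' /existsP [t /eqP eU']].
by rewrite /biedge -!QE QU QU' eU' M_neq0 -{2}(toggleK t U) M_neq0.
Qed.
Lemma connect_biedge_init X M F D I I' :
  (forall x q, M x (Ch_init x q) != 0) -> I \subset I' ->
  (forall I1, I \subset I1 -> I1 \subset I' -> X (I1, F, D)) ->
  connect (biedge X M) (I', F, D) (I, F, D).
Proof.
move=> M_neq0 sub XI; apply: (connect_biedge_toggle (g := fun I1 => (I1, F, D))) => // [S t|].
  exact: (M_neq0 (S, F, D) t).
exact: connect_toggle_rel_subset.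
Qed.

Lemma connect_biedge_final X M I D F F' :
  (forall x q, M x (Ch_final x q) != 0) -> F \subset F' ->
  (forall F1, F \subset F1 -> F1 \subset F' -> X (I, F1, D)) ->
  connect (biedge X M) (I, F', D) (I, F, D).
Proof.
move=> M_neq0 sub XF; apply: (connect_biedge_toggle (g := fun F1 => (I, F1, D))) => // [S t|].
  exact: (M_neq0 (I, S, D) t).
exact: connect_toggle_rel_subset.
Qed.

Lemma connect_biedge_trans X M I F D D' :
  (forall x t, M x (Ch_trans x t) != 0) -> D \subset D' ->
  (forall D1, D \subset D1 -> D1 \subset D' -> X (I, F, D1)) ->
  connect (biedge X M) (I, F, D') (I, F, D).
Proof.
move=> M_neq0 sub XD; apply: (connect_biedge_toggle (g := fun D1 => (I, F, D1))) => // [S t|].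
  exact: (M_neq0 (I, F, S) t).
exact: connect_toggle_rel_subset.
Qed.
End Biedges.

Section Irreducibility.
Variables (n : nat) (A : finType) (R : realFieldType).
Variables (X : pred (nfa n A)) (ok : pred {set 'I_n * A * 'I_n}).
Hypothesis XE : forall x, X x = trim x && ok (trans x).
Hypothesis ok_sub : forall D D' : {set 'I_n * A * 'I_n}, D' \subset D -> ok D -> ok D'.
Hypotheses (n_gt0 : (0 < n)%N) (A_gt0 : (0 < #|A|)%N).
Local Open Scope ring_scope.

Lemma irreducible_Smat (s1 s2 s3 : R) : s1 != 0 -> s2 != 0 -> s3 != 0 ->
  irreducible X (Smat X s1 s2 s3).
Proof.
move=> s10 s20 s30; apply: (irreducible_of_hub (c := (setT, setT, set0))) => -[[I F] D].
rewrite XE /trim => /andP [/andP [accx coaccx] okD].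
have growF : connect (biedge X (Smat X s1 s2 s3)) (I, F, D) (I, setT, D).
  rewrite connect_biedgeC; apply: connect_biedge_final (subsetT F) _ => [x q|F1 subF _].
    exact: Smat_Ch_final.
  rewrite XE okD /trim (coaccessible_sub I subF (subxx _) coaccx).
  by rewrite (accessible_sub F1 (subxx _) (subxx _) accx).
have growI : connect (biedge X (Smat X s1 s2 s3)) (I, setT, D) (setT, setT, D).
  rewrite connect_biedgeC; apply: connect_biedge_init (subsetT I) _ => [x q|I1 subI _].
    exact: Smat_Ch_init.
  by rewrite XE okD /trim coaccessible_setT (accessible_sub setT subI (subxx _) accx).
apply: connect_trans growF (connect_trans growI _).
apply: connect_biedge_trans (sub0set D) _ => [x t|D1 _ subD]; first exact: Smat_Ch_trans.
by rewrite XE trim_setT (ok_sub subD okD).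
Qed.
End Irreducibility.

Section BulletIrreducibility.
Variables (n' : nat) (A : finType) (R : realFieldType) (a0 : A).
Local Notation V := 'I_n'.+1.
Local Notation root0 := [set i : V | val i == 0%N].
Variables (X : pred (nfa n'.+1 A)) (ok : pred {set V * A * V}).
Hypothesis XE : forall x, X x = trim x && ok (trans x).
Hypothesis ok_sub : forall D D' : {set V * A * V}, D' \subset D -> ok D -> ok D'.
Hypothesis ok_add :
  forall (D : {set V * A * V}) e, ok D -> #|out D e.1.1| <= 1 -> ok (e |: D).
Local Open Scope ring_scope.

Lemma accessible_root0 (F : {set V}) (D : {set V * A * V}) :
  accessible (root0, F, D) = reaches_all ord0 D.
Proof.
apply/forallP/forallP => [acc q | rD q].
  have /exists_inP [i] := acc q; rewrite inE => /eqP i0.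
  by rewrite (_ : i = ord0) //; apply: val_inj.
by apply/exists_inP; exists ord0; [rewrite inE | apply: rD].
Qed.

Lemma irreducible_Smat_bullet (r : R) : r != 0 -> 1 - r != 0 ->
  irreducible (bullet X) (Smat_bullet X r).
Proof.
move=> r0 r1; apply: (irreducible_of_hub (c := (root0, setT, chain n' a0 n'))) => -[[I F] D].
rewrite /bullet XE /trim => /andP [/andP [/andP [accx coaccx] okD] /eqP eI].
have {}eI : I = root0 := eI; subst I; rewrite accessible_root0 in accx.
have growF : connect (biedge (bullet X) (Smat_bullet X r)) (root0, F, D) (root0, setT, D).
  rewrite connect_biedgeC; apply: connect_biedge_final (subsetT F) _ => [x q|F1 subF _].
    exact: Smat_Ch_final.
  rewrite /bullet XE okD /trim accessible_root0 accx eqxx !andbT.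
  by rewrite (coaccessible_sub root0 subF (subxx _) coaccx).
apply: connect_trans growF _.
apply: (connect_biedge_toggle (Q := admissible ok) (g := fun D => (root0, setT, D))) => [S|S t|].
- by rewrite /bullet XE /trim accessible_root0 coaccessible_setT /init /= eqxx !andbT.
- by apply: Smat_Ch_trans => //; apply/card_gt0P; exists a0.
- by apply: connect_chain => //; rewrite /admissible accx.
Qed.
End BulletIrreducibility.

Section OutDegree.
Variables (V A : finType) (m : nat).
Hypothesis m_ge2 : 2 <= m.
Local Notation edge := (V * A * V)%type.
Implicit Types (D : {set edge}) (e : edge).

Definition outdeg_le D := [forall p, #|out D p| <= m].
Definition label_outdeg_le D := [forall p, forall a, #|[set q | (p, a, q) \in D]| <= m].

Lemma card_out_sub D D' p : D' \subset D -> #|out D' p| <= #|out D p|.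
Proof. by move=> sub; apply/subset_leq_card/subsetP => aq; rewrite !inE; apply: (subsetP sub). Qed.

Lemma card_label_out D p a : #|[set q | (p, a, q) \in D]| <= #|out D p|.
Proof.
rewrite -(card_imset _ (fun q q' (e : (a, q) = (a, q')) => congr1 snd e)).
by apply/subset_leq_card/subsetP => _ /imsetP [q + ->]; rewrite !inE.
Qed.

Lemma outdeg_le_sub D D' : D' \subset D -> outdeg_le D -> outdeg_le D'.
Proof.
by move=> sub /forallP le_m; apply/forallP => p; apply: leq_trans (card_out_sub _ sub) _.
Qed.

Lemma label_outdeg_le_sub D D' : D' \subset D -> label_outdeg_le D -> label_outdeg_le D'.
Proof.
move=> sub /forallP le_m; apply/forallP => p; apply/forallP => a.
apply: leq_trans (forallP (le_m p) a); apply/subset_leq_card/subsetP => q.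
by rewrite !inE; apply: (subsetP sub).
Qed.

Lemma card_out_setU1_le D e : #|out D e.1.1| <= 1 -> #|out (e |: D) e.1.1| <= m.
Proof.
by move=> low; rewrite out_setU1_src cardsU1; apply: leq_trans m_ge2; apply: leq_add (leq_b1 _) low.
Qed.

Lemma outdeg_le_add D e : outdeg_le D -> #|out D e.1.1| <= 1 -> outdeg_le (e |: D).
Proof.
move=> /forallP le_m low; apply/forallP => p; have [-> | ne] := eqVneq p e.1.1.
  exact: card_out_setU1_le.
by rewrite out_setU1_other.
Qed.

Lemma label_outdeg_le_add D e :
  label_outdeg_le D -> #|out D e.1.1| <= 1 -> label_outdeg_le (e |: D).
Proof.
move=> /forallP le_m low; apply/forallP => p; apply/forallP => a.
have [-> | ne] := eqVneq p e.1.1.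
  exact: leq_trans (card_label_out _ _ _) (card_out_setU1_le low).
apply: leq_trans (forallP (le_m p) a); apply/subset_leq_card/subsetP => q.
by rewrite !inE => /orP [/eqP pe|//]; rewrite -pe eqxx in ne.
Qed.
End OutDegree.

Local Open Scope ring_scope.

Theorem lemma1 (R : realFieldType) (A : finType) (m n : nat) (r r1 r2 r3 : R) :
  (2 <= #|A|)%N -> (0 < n)%N -> (2 <= m)%N ->
  0 < r -> r < 1 -> 0 < r1 -> 0 < r2 -> 0 < r3 -> r1 + r2 + r3 <= 1 ->
  (irreducible (classN n A) (Smat (classN n A) r1 r2 r3) /\
   irreducible (classNm n A m) (Smat (classNm n A m) r1 r2 r3) /\
   irreducible (classN'm n A m) (Smat (classN'm n A m) r1 r2 r3)) /\
  (irreducible (bullet (classN n A)) (Smat_bullet (classN n A) r) /\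
   irreducible (bullet (classNm n A m)) (Smat_bullet (classNm n A m) r) /\
   irreducible (bullet (classN'm n A m)) (Smat_bullet (classN'm n A m) r)).
Proof.
(* Irreducibility only depends on which entries are nonzero, so the bound
   r1 + r2 + r3 <= 1 is not needed. *)
move=> A_ge2 n_gt0 m_ge2 r_gt0 r_lt1 r1_gt0 r2_gt0 r3_gt0 _.
have A_gt0 : (0 < #|A|)%N := ltnW A_ge2.
have [a0 _] : exists a0, a0 \in A by apply/card_gt0P.
have [r1_neq0 r2_neq0 r3_neq0] := And3 (lt0r_neq0 r1_gt0) (lt0r_neq0 r2_gt0) (lt0r_neq0 r3_gt0).
have [r_neq0 r'_neq0] : r != 0 /\ 1 - r != 0 by rewrite !lt0r_neq0 // subr_gt0.
case: n n_gt0 => // n' _.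
have classNE x : classN n'.+1 A x = trim x && predT (trans x) by rewrite andbT.
split; (split; [|split]).
- exact: (irreducible_Smat (ok := predT)).
- by apply: (irreducible_Smat (ok := outdeg_le m)) => //; apply: outdeg_le_sub.
- by apply: (irreducible_Smat (ok := label_outdeg_le m)) => //; apply: label_outdeg_le_sub.
- exact: (irreducible_Smat_bullet a0 (ok := predT)).
- apply: (irreducible_Smat_bullet a0 (ok := outdeg_le m)) => //.
    exact: outdeg_le_sub.
  exact: outdeg_le_add.
- apply: (irreducible_Smat_bullet a0 (ok := label_outdeg_le m)) => //.
    exact: label_outdeg_le_sub.
  exact: label_outdeg_le_add.
Qed.
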